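(* Let $\lambda\in\mathbb{R}$, let $r,n\ge1$ be integers and let $z\in\mathbb{C}$. Then \[ \phi_{n,\lambda}^{(r,r)}(|z|^2)=\langle z|\prod_{k=0}^{n-1}\big[(a^{\dagger})^{r}a^{r}-k\lambda\big]|z\rangle=\sum_{p=0}^{nr}\sum_{k=p}^{nr}\frac{(-1)^{k-p}}{k!}\binom{k}{p}\big((p)_r\big)_{n,\lambda}\,(|z|^2)^{k}. \] In particular, when $|z|=1$, \[ \phi_{n,\lambda}^{(r,r)}=\langle z|\prod_{k=0}^{n-1}\big[(a^{\dagger})^{r}a^{r}-k\lambda\big]|z\rangle=\sum_{p=0}^{nr}\sum_{k=p}^{nr}\frac{(-1)^{k-p}}{k!}\binom{k}{p}\big((p)_r\big)_{n,\lambda}. \]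
   Context: Notation: $(x)_0=1$, $(x)_m=x(x-1)\cdots(x-m+1)$; $(y)_{0,\lambda}=1$, $(y)_{n,\lambda}=y(y-\lambda)\cdots(y-(n-1)\lambda)$. The boson annihilation and creation operators $a,a^{\dagger}$ satisfy $[a,a^{\dagger}]=aa^{\dagger}-a^{\dagger}a=1$ and act on the orthonormal number states $|m\rangle$ ($m=0,1,2,\dots$, $\langle m|n\rangle=\delta_{m,n}$) by $a|m\rangle=\sqrt{m}\,|m-1\rangle$, $a^{\dagger}|m\rangle=\sqrt{m+1}\,|m+1\rangle$. For $z\in\mathbb{C}$ the coherent state is $|z\rangle=e^{-|z|^2/2}\sum_{n\ge0}\frac{z^n}{\sqrt{n!}}|n\rangle$, so $a|z\rangle=z|z\rangle$, $\langle z|a^{\dagger}=\bar z\langle z|$, $\langle z|z\rangle=1$. The numbers $S_\lambda^{(r,r)}(n,k)$, $0\le k\le nr$, are defined by the normal ordering identity $\prod_{j=0}^{n-1}\big((a^{\dagger})^{r}a^{r}-j\lambda\big)=\sum_{k=0}^{nr}S_\lambda^{(r,r)}(n,k)(a^{\dagger})^{k}a^{k}$ (equivalently, the same identity with $a^{\dagger}$ replaced by multiplication by $x$ and $a$ by $d/dx$), and $\phi_{n,\lambda}^{(r,r)}(x)=\sum_{k=0}^{nr}S_\lambda^{(r,r)}(n,k)x^k$, $\phi_{n,\lambda}^{(r,r)}=\phi_{n,\lambda}^{(r,r)}(1)$. *)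

From Stdlib Require Import Reals Factorial.
From Coquelicot Require Import Coquelicot.
Open Scope R_scope.

Fixpoint falling (x : R) (m : nat) : R :=
  match m with O => 1 | S m' => falling x m' * (x - INR m') end.

Fixpoint gfalling (lam y : R) (n : nat) : R :=
  match n with O => 1 | S n' => gfalling lam y n' * (y - INR n' * lam) end.

(** Binomial coefficient k choose p (for p <= k), as a real number. *)
Definition binom (k p : nat) : R :=
  INR (fact k) / (INR (fact p) * INR (fact (k - p))).

(** Fock space: a state is given by its coefficient sequence in the number
    basis |m>, i.e. v = sum_m v m |m>. Operators act on all coefficient
    sequences (they are "local", so this is well-defined). *)
Definition fock := nat -> C.

(** Annihilation: a|m> = sqrt m |m-1>, i.e. (a v)_m = sqrt(m+1) v_{m+1}. *)
Definition ann (v : fock) : fock :=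
  fun m => Cmult (RtoC (sqrt (INR (S m)))) (v (S m)).

(** Creation: a^dag|m> = sqrt(m+1) |m+1>, i.e. (a^dag v)_{m+1} = sqrt(m+1) v_m,
    (a^dag v)_0 = 0. *)
Definition cre (v : fock) : fock :=
  fun m => match m with
           | O => RtoC 0
           | S m' => Cmult (RtoC (sqrt (INR m))) (v m')
           end.

Definition normal_op (k : nat) (v : fock) : fock :=
  Nat.iter k cre (Nat.iter k ann v).

(** prod_{j=0}^{n-1} ((a^dag)^r a^r - j lambda), as the composition
    A_0 o A_1 o ... o A_{n-1} (the factors commute). *)
Fixpoint prod_op (r : nat) (lam : R) (n : nat) (v : fock) : fock :=
  match n with
  | O => v
  | S n' => prod_op r lam n'
              (fun m => Cminus (normal_op r v m) (Cmult (RtoC (INR n' * lam)) (v m)))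
  end.

Definition coh (z : C) : fock :=
  fun m => Cmult (RtoC (exp (- (Cmod z ^ 2) / 2) / sqrt (INR (fact m)))) (pow_n z m).

(** phi^{(r,r)}_{n,lambda}(x) = sum_{k=0}^{nr} S(n,k) x^k, given the
    coefficients S k = S^{(r,r)}_lambda(n,k). *)
Definition phi (Sc : nat -> R) (n r : nat) (x : R) : R :=
  sum_f_R0 (fun k => Sc k * x ^ k) (n * r).

(** Right-hand side: sum_{p=0}^{nr} sum_{k=p}^{nr} (-1)^{k-p}/k! C(k,p) ((p)_r)_{n,lambda} x^k
    (inner index k = p + j, j = 0..nr-p). *)
Definition rhs (lam : R) (n r : nat) (x : R) : R :=
  sum_f_R0 (fun p =>
    sum_f_R0 (fun j =>
      (-1) ^ j / INR (fact (p + j)) * binom (p + j) p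
        * gfalling lam (falling (INR p) r) n * x ^ (p + j))
      (n * r - p))
    (n * r).

(** In the number basis every operator in sight is diagonal:
    (a^dag)^k a^k |m> = (m)_k |m>, hence the product acts on |m> by
    ((m)_r)_{n,lambda}, and the normal ordering identity read on |m> becomes
    the polynomial identity ((m)_r)_{n,lambda} = sum_k S(n,k) (m)_k.  The
    coherent state puts Poisson weights e^{-x} x^m / m! (x = |z|^2) on |m>,
    under which (m)_k has mean x^k; this gives phi(x).  For the double sum,
    each falling factorial (p)_i is recovered from its values at p = 0..nr
    because sum_{p + j <= N - i} x^p/p! (-x)^j/j! is the truncation of
    e^x e^{-x} = 1. *)

From Stdlib Require Import Reals Factorial Lia Lra FunctionalExtensionality.
From Coquelicot Require Import Coquelicot.
Open Scope R_scope.

Lemma sum_f_R0_mult_r (f : nat -> R) (c : R) (N : nat) :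
  sum_f_R0 (fun i => f i * c) N = sum_f_R0 f N * c.
Proof. rewrite <- scal_sum; ring. Qed.

Lemma sum_f_R0_eq0 (f : nat -> R) (N : nat) :
  (forall i, (i <= N)%nat -> f i = 0) -> sum_f_R0 f N = 0.
Proof. intros Hf. rewrite (sum_eq f (fun _ => 0)), sum_cte by exact Hf. ring. Qed.

Lemma sum_f_R0_swap (u : nat -> nat -> R) (m n : nat) :
  sum_f_R0 (fun i => sum_f_R0 (u i) n) m
  = sum_f_R0 (fun j => sum_f_R0 (fun i => u i j) m) n.
Proof.
  rewrite <- !sum_n_Reals.
  rewrite (sum_n_ext _ (fun i => sum_n (u i) n))
    by (intros i; symmetry; apply sum_n_Reals).
  rewrite sum_n_switch. apply sum_n_ext. intros j. apply sum_n_Reals.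
Qed.

Lemma sum_f_R0_triangle (F : nat -> nat -> R) (N : nat) :
  sum_f_R0 (fun p => sum_f_R0 (F p) (N - p)) N
  = sum_f_R0 (fun m => sum_f_R0 (fun q => F q (m - q)%nat) m) N.
Proof.
  induction N as [|N IH]; [reflexivity|].
  cbn [sum_f_R0]. rewrite <- IH.
  rewrite (sum_eq (fun p => sum_f_R0 (F p) (S N - p))
             (fun p => sum_f_R0 (F p) (N - p) + F p (S N - p)%nat)).
  - rewrite plus_sum, Nat.sub_diag. simpl. ring.
  - intros p Hp. replace (S N - p)%nat with (S (N - p)) by lia. reflexivity.
Qed.

Lemma sum_f_R0_shift (f : nat -> R) (i N : nat) :
  (i <= N)%nat -> (forall p, (p < i)%nat -> f p = 0) ->
  sum_f_R0 f N = sum_f_R0 (fun q => f (q + i)%nat) (N - i).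
Proof.
  revert f N. induction i as [|i IH]; intros f N HiN Hf.
  - rewrite Nat.sub_0_r. apply sum_eq. intros q _. rewrite Nat.add_0_r. reflexivity.
  - rewrite decomp_sum, Hf, Rplus_0_l by lia.
    rewrite (IH (fun k => f (S k)) (pred N)) by (lia || (intros; apply Hf; lia)).
    replace (pred N - i)%nat with (N - S i)%nat by lia.
    apply sum_eq. intros q _. rewrite Nat.add_succ_r. reflexivity.
Qed.

Lemma falling_nat_eq0 (p i : nat) : (p < i)%nat -> falling (INR p) i = 0.
Proof.
  induction i as [|i IH]; intros Hpi; [lia|]. simpl.
  destruct (Nat.eq_dec p i) as [->|Hne].
  - ring.
  - rewrite IH by lia. ring.
Qed.

Lemma falling_nat_add (q i : nat) :
  falling (INR (q + i)) i = INR (fact (q + i)) / INR (fact q).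
Proof.
  revert q. induction i as [|i IH]; intros q.
  - rewrite Nat.add_0_r. simpl. field. apply INR_fact_neq_0.
  - simpl falling. rewrite <- plus_n_Sm, <- Nat.add_succ_l, IH, fact_simpl, mult_INR.
    rewrite plus_INR, S_INR.
    assert (Hq : INR q + 1 <> 0) by (pose proof (pos_INR q); lra).
    field. split; [apply INR_fact_neq_0 | exact Hq].
Qed.

Lemma iter_cre_weight (k : nat) (a : R) (u : fock) (m : nat) :
  Nat.iter k cre (fun j => RtoC (INR j - a) * u j)%C m
  = (RtoC (INR m - (a + INR k)) * Nat.iter k cre u m)%C.
Proof.
  revert m. induction k as [|k IH]; intros m.
  - simpl. f_equal. f_equal. ring.
  - rewrite !Nat.iter_succ. unfold cre at 1 3. destruct m as [|m].
    + ring.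
    + rewrite (IH m). replace (INR (S m) - (a + INR (S k))) with (INR m - (a + INR k))
        by (rewrite !S_INR; ring).
      ring.
Qed.

Lemma cre_ann (u : fock) (j : nat) : cre (ann u) j = (RtoC (INR j) * u j)%C.
Proof.
  unfold cre, ann. destruct j as [|j].
  - simpl. ring.
  - rewrite Cmult_assoc, <- RtoC_mult, sqrt_sqrt by apply pos_INR. reflexivity.
Qed.

Lemma normal_op_diag (k : nat) (v : fock) (m : nat) :
  normal_op k v m = (RtoC (falling (INR m) k) * v m)%C.
Proof.
  induction k as [|k IH].
  - unfold normal_op. simpl Nat.iter. simpl falling. ring.
  - unfold normal_op. rewrite Nat.iter_succ_r, Nat.iter_succ.
    replace (cre (ann (Nat.iter k ann v)))
      with (fun j => RtoC (INR j - 0) * Nat.iter k ann v j)%C.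
    2:{ apply functional_extensionality. intros j. rewrite cre_ann, Rminus_0_r. reflexivity. }
    rewrite iter_cre_weight. fold (normal_op k v). rewrite IH. simpl falling.
    rewrite RtoC_mult, Rplus_0_l. ring.
Qed.

Lemma prod_op_diag (r : nat) (lam : R) (n : nat) (v : fock) (m : nat) :
  prod_op r lam n v m = (RtoC (gfalling lam (falling (INR m) r) n) * v m)%C.
Proof.
  revert v. induction n as [|n IH]; intros v.
  - simpl. ring.
  - simpl prod_op. rewrite IH, normal_op_diag. simpl gfalling.
    rewrite (RtoC_mult (gfalling _ _ _)), RtoC_minus. ring.
Qed.

Lemma sum_n_RtoC (a : nat -> R) (N : nat) :
  sum_n (fun k => RtoC (a k)) N = RtoC (sum_n a N).
Proof.
  induction N as [|N IH].
  - rewrite !sum_O. reflexivity.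
  - rewrite !sum_Sn, IH. unfold plus; simpl. rewrite RtoC_plus. reflexivity.
Qed.

Lemma Cconj_RtoC (a : R) : Cconj (RtoC a) = RtoC a.
Proof. unfold Cconj, RtoC; simpl. f_equal. ring. Qed.

Lemma is_series_RtoC (a : nat -> R) (l : R) :
  is_series a l -> @is_series C_AbsRing C_NormedModule (fun k => RtoC (a k)) (RtoC l).
Proof.
  unfold is_series. intros Ha.
  eapply filterlim_ext. { intros N. symmetry. apply sum_n_RtoC. }
  eapply filterlim_comp; [exact Ha|].
  intros P [eps HP]. exists eps. intros y Hy. apply HP.
  apply C_NormedModule_mixin_compat1.
  unfold minus, plus, opp; simpl. rewrite <- RtoC_opp, <- RtoC_plus, Cmod_R.
  exact Hy.
Qed.

Lemma gfalling_falling_expansion (r : nat) (lam : R) (n N : nat) (Sc : nat -> R) :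
  (forall (v : fock) (m : nat),
      prod_op r lam n v m = sum_n (fun k => Cmult (RtoC (Sc k)) (normal_op k v m)) N) ->
  forall m : nat,
    gfalling lam (falling (INR m) r) n = sum_f_R0 (fun k => Sc k * falling (INR m) k) N.
Proof.
  intros HS m. specialize (HS (fun _ => RtoC 1) m).
  rewrite prod_op_diag, Cmult_1_r in HS.
  rewrite (sum_n_ext _ (fun k => RtoC (Sc k * falling (INR m) k))) in HS.
  - rewrite sum_n_RtoC, sum_n_Reals in HS. exact (f_equal fst HS).
  - intros k. rewrite normal_op_diag, Cmult_1_r, RtoC_mult. reflexivity.
Qed.

Lemma is_series_falling_exp (x : R) (i : nat) :
  is_series (fun m => x ^ m * falling (INR m) i / INR (fact m)) (x ^ i * exp x).
Proof.
  assert (Hshift : is_series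
            (fun k => x ^ (i + k) * falling (INR (i + k)) i / INR (fact (i + k)))
            (x ^ i * exp x)).
  { pose proof (is_series_scal_l (x ^ i) _ _ (is_exp_Reals x)) as Hexp.
    eapply is_series_ext; [|exact Hexp].
    intros k. cbn. unfold scal; simpl. unfold mult; simpl.
    change (@pow_n (AbsRing.Ring R_AbsRing) x k) with (@pow_n R_Ring x k).
    rewrite (pow_n_pow x k), (Nat.add_comm i k), falling_nat_add, pow_add.
    field. split; apply INR_fact_neq_0. }
  destruct i as [|i].
  - exact Hshift.
  - apply (is_series_decr_n _ (S i)); [lia|].
    rewrite sum_n_Reals, sum_f_R0_eq0.
    + match goal with |- is_series _ ?l => replace l with (x ^ S i * exp x) end.
      * exact Hshift.
      * unfold plus, opp; simpl. ring.
    + intros p Hp. rewrite falling_nat_eq0 by lia. unfold Rdiv. ring.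
Qed.

Lemma is_series_poisson_falling_poly (c : nat -> R) (N : nat) (x : R) :
  is_series (fun m => exp (- x) * x ^ m / INR (fact m)
                      * sum_f_R0 (fun i => c i * falling (INR m) i) N)
            (sum_f_R0 (fun i => c i * x ^ i) N).
Proof.
  assert (Hmoment : forall i, is_series
            (fun m => exp (- x) * x ^ m / INR (fact m) * (c i * falling (INR m) i))
            (c i * x ^ i)).
  { intros i.
    pose proof (is_series_scal_l (c i * exp (- x)) _ _ (is_series_falling_exp x i)) as Hci.
    replace (c i * x ^ i) with (c i * exp (- x) * (x ^ i * exp x)).
    - eapply is_series_ext; [|exact Hci].
      intros m. unfold scal; simpl. unfold mult; simpl. unfold Rdiv. ring.
    - transitivity (c i * x ^ i * exp (- x + x)); [rewrite exp_plus; ring|].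
      rewrite Rplus_opp_l, exp_0. ring. }
  induction N as [|N IH]; cbn [sum_f_R0].
  - exact (Hmoment 0%nat).
  - pose proof (is_series_plus _ _ _ _ IH (Hmoment (S N))) as Hsum.
    eapply is_series_ext; [|exact Hsum].
    intros m. unfold plus; simpl. ring.
Qed.

Lemma coh_diag_term (z : C) (d : R) (m : nat) :
  (Cconj (coh z m) * (RtoC d * coh z m))%C
  = RtoC (exp (- (Cmod z ^ 2)) * (Cmod z ^ 2) ^ m / INR (fact m) * d).
Proof.
  unfold coh.
  set (c := exp (- (Cmod z ^ 2) / 2) / sqrt (INR (fact m))).
  set (w := pow_n z m).
  assert (Hc : c * c = exp (- (Cmod z ^ 2)) / INR (fact m)).
  { assert (Hs : sqrt (INR (fact m)) * sqrt (INR (fact m)) = INR (fact m))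
      by (apply sqrt_sqrt, pos_INR).
    assert (Hs0 : sqrt (INR (fact m)) <> 0)
      by (intro E; rewrite E in Hs; pose proof (INR_fact_neq_0 m); lra).
    unfold c. set (s := sqrt (INR (fact m))) in *. rewrite <- Hs.
    replace (exp (- Cmod z ^ 2))
      with (exp (- (Cmod z ^ 2) / 2) * exp (- (Cmod z ^ 2) / 2))
      by (rewrite <- exp_plus; f_equal; field).
    field. exact Hs0. }
  rewrite Cmult_conj, Cconj_RtoC.
  transitivity (RtoC (c * c * d) * (w * Cconj w))%C; [rewrite !RtoC_mult; ring|].
  rewrite <- Cmod2_conj, <- RtoC_mult, Hc. f_equal.
  unfold w. rewrite Cmod_pow, <- pow_mult, Nat.mul_comm, pow_mult.
  unfold Rdiv. ring.
Qed.

Lemma is_series_coh_diag (z : C) (d c : nat -> R) (N : nat) :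
  (forall m, d m = sum_f_R0 (fun i => c i * falling (INR m) i) N) ->
  is_series (fun m => Cmult (Cconj (coh z m)) (Cmult (RtoC (d m)) (coh z m)))
            (RtoC (sum_f_R0 (fun i => c i * (Cmod z ^ 2) ^ i) N)).
Proof.
  intros Hd.
  pose proof (is_series_RtoC _ _ (is_series_poisson_falling_poly c N (Cmod z ^ 2))) as Hser.
  eapply is_series_ext; [|exact Hser].
  intros m. rewrite coh_diag_term, Hd. reflexivity.
Qed.

Lemma partial_exp_mul_exp_opp (x : R) (M : nat) :
  sum_f_R0 (fun q => sum_f_R0 (fun j =>
      x ^ q / INR (fact q) * ((- x) ^ j / INR (fact j))) (M - q)) M = 1.
Proof.
  rewrite (sum_f_R0_triangle (fun q j => x ^ q / INR (fact q) * ((- x) ^ j / INR (fact j)))).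
  rewrite (sum_eq _ (fun m => (x + - x) ^ m / INR (fact m))).
  - rewrite Rplus_opp_r. destruct M as [|M]; [simpl; field|].
    rewrite decomp_sum, sum_f_R0_eq0 by (lia || (intros; simpl; unfold Rdiv; ring)).
    simpl. field.
  - intros m _. rewrite binomial. unfold Rdiv. rewrite (Rmult_comm (sum_f_R0 _ m)), scal_sum.
    apply sum_eq. intros q Hq. unfold Binomial.C.
    pose proof (INR_fact_neq_0 q). pose proof (INR_fact_neq_0 (m - q)).
    pose proof (INR_fact_neq_0 m).
    field. auto.
Qed.

Lemma sum_falling_inversion_monomial (x : R) (i N : nat) : (i <= N)%nat ->
  sum_f_R0 (fun p => sum_f_R0 (fun j =>
      falling (INR p) i * ((-1) ^ j * x ^ (p + j) / (INR (fact p) * INR (fact j))))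
    (N - p)) N
  = x ^ i.
Proof.
  intros HiN.
  rewrite (sum_f_R0_shift _ i N HiN).
  2:{ intros p Hp. apply sum_f_R0_eq0. intros j _. rewrite falling_nat_eq0 by lia. ring. }
  rewrite (sum_eq _ (fun q => sum_f_R0 (fun j =>
      x ^ q / INR (fact q) * ((- x) ^ j / INR (fact j))) (N - i - q) * x ^ i)).
  - rewrite sum_f_R0_mult_r, partial_exp_mul_exp_opp. ring.
  - intros q Hq. rewrite <- sum_f_R0_mult_r.
    replace (N - (q + i))%nat with (N - i - q)%nat by lia.
    apply sum_eq. intros j _.
    replace (- x) with (-1 * x) by ring.
    rewrite falling_nat_add, !pow_add, Rpow_mult_distr.
    pose proof (INR_fact_neq_0 q). pose proof (INR_fact_neq_0 j).
    pose proof (INR_fact_neq_0 (q + i)).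
    field. auto.
Qed.

Lemma sum_falling_inversion (c : nat -> R) (N : nat) (x : R) :
  sum_f_R0 (fun k => c k * x ^ k) N =
  sum_f_R0 (fun p => sum_f_R0 (fun j =>
      (-1) ^ j / INR (fact (p + j)) * binom (p + j) p
        * sum_f_R0 (fun i => c i * falling (INR p) i) N * x ^ (p + j)) (N - p)) N.
Proof.
  set (T := fun p j => (-1) ^ j * x ^ (p + j) / (INR (fact p) * INR (fact j))).
  rewrite (sum_eq (fun p => sum_f_R0 _ (N - p))
             (fun p => sum_f_R0 (fun i => sum_f_R0 (fun j =>
                c i * (falling (INR p) i * T p j)) (N - p)) N)).
  - rewrite sum_f_R0_swap. apply sum_eq. intros i Hi.
    rewrite <- sum_falling_inversion_monomial with (N := N) by exact Hi.
    rewrite scal_sum. apply sum_eq. intros p _.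
    rewrite <- sum_f_R0_mult_r. apply sum_eq. intros j _. unfold T. ring.
  - intros p _. rewrite <- sum_f_R0_swap. apply sum_eq. intros j _.
    set (w := (-1) ^ j / INR (fact (p + j)) * binom (p + j) p).
    transitivity (sum_f_R0 (fun i => c i * falling (INR p) i) N * (w * x ^ (p + j)));
      [ring|].
    rewrite <- sum_f_R0_mult_r. apply sum_eq. intros i _.
    unfold w, T, binom. replace (p + j - p)%nat with j by lia.
    pose proof (INR_fact_neq_0 p). pose proof (INR_fact_neq_0 j).
    pose proof (INR_fact_neq_0 (p + j)).
    field. auto.
Qed.

Theorem theorem6 (lam : R) (r n : nat) (Hr : (1 <= r)%nat) (Hn : (1 <= n)%nat)
  (Sc : nat -> R)
  (HS : forall (v : fock) (m : nat),
      prod_op r lam n v m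
      = sum_n (fun k => Cmult (RtoC (Sc k)) (normal_op k v m)) (n * r))
  (z : C) :
  is_series (fun m => Cmult (Cconj (coh z m)) (prod_op r lam n (coh z) m))
            (RtoC (phi Sc n r (Cmod z ^ 2)))
  /\ phi Sc n r (Cmod z ^ 2) = rhs lam n r (Cmod z ^ 2)
  /\ (Cmod z = 1 ->
        is_series (fun m => Cmult (Cconj (coh z m)) (prod_op r lam n (coh z) m))
                  (RtoC (phi Sc n r 1))
        /\ phi Sc n r 1 = rhs lam n r 1).
Proof.
  pose proof (gfalling_falling_expansion r lam n (n * r) Sc HS) as Hexpand.
  assert (Hphi : forall x, phi Sc n r x = rhs lam n r x).
  { intros x. unfold phi, rhs. rewrite sum_falling_inversion.
    apply sum_eq. intros p _. apply sum_eq. intros j _. rewrite Hexpand. reflexivity. }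
  assert (Hser : is_series (fun m => Cmult (Cconj (coh z m)) (prod_op r lam n (coh z) m))
                           (RtoC (phi Sc n r (Cmod z ^ 2)))).
  { eapply is_series_ext; [|exact (is_series_coh_diag z _ Sc (n * r) Hexpand)].
    intros m. rewrite prod_op_diag. reflexivity. }
  split; [exact Hser|]. split; [apply Hphi|].
  intros Hz. rewrite Hz, pow1 in Hser. split; [exact Hser|apply Hphi].
Qed.
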